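(* Let $X$ be a locally compact, Hausdorff, second countable space and $(Y,d)$ a metric space. Then the topologies $\tau_{co}$ and $\tau_{cc}$ coincide on $C_{od}(X,Y)$.
   Context: $C_{od}(X,Y)$ is the set of continuous functions $f:\mathrm{dom}(f)\to Y$ whose domain is an open subset of $X$ (including the empty function), and $C_{od}^\star(X,Y)=C_{od}(X,Y)\setminus\{\emptyset\}$. The topology $\tau_{co}$ on $C_{od}(X,Y)$ is generated by the subbasic sets $\langle K,V\rangle=\{f: K\subseteq\mathrm{dom}(f),\ f(K)\subseteq V\}$, $K\subseteq X$ compact, $V\subseteq Y$ open. For a nonempty compact $K\subseteq\mathrm{dom}(f)\cap\mathrm{dom}(g)$, $d_K(f,g)=\sup_{x\in K}d(f(x),g(x))$; for $f\in C_{od}^\star(X,Y)$, nonempty compact $K\subseteq\mathrm{dom}(f)$ and $\epsilon>0$, $B_K(f,\epsilon)=\{g\in C_{od}^\star(X,Y): K\subseteq\mathrm{dom}(g),\ d_K(f,g)<\epsilon\}$. The topology of compact convergence $\tau_{cc}$ is the topology having as basis all sets $B_K(f,\epsilon)$ together with $C_{od}(X,Y)$. *)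

From HB Require Import structures.
From mathcomp Require Import all_boot all_order all_algebra.
From mathcomp Require Import all_classical all_reals all_analysis.
Set Implicit Arguments. Unset Strict Implicit. Unset Printing Implicit Defensive.
Import Order.TTheory GRing.Theory Num.Theory.
Local Open Scope classical_set_scope.
Local Open Scope ring_scope.

Section Cod.
Context {R : realType} {X : topologicalType} {Y : Type} (d : Y -> Y -> R).

Definition is_metric : Prop :=
  [/\ forall y1 y2, d y1 y2 = 0 <-> y1 = y2,
      forall y1 y2, d y1 y2 = d y2 y1 &
      forall y1 y2 y3, d y1 y3 <= d y1 y2 + d y2 y3].

Definition mopen (V : set Y) : Prop :=
  forall y, V y -> exists2 e : R, 0 < e & forall y', d y y' < e -> V y'.

(* partial functions X -> Y, represented by their graph as X -> option Y *)
Definition pfun := X -> option Y.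

Definition dom (f : pfun) : set X := [set x | exists y, f x = Some y].

(* continuity of f on its domain (topological continuity of the restriction) *)
Definition pcontinuous (f : pfun) : Prop :=
  forall x y, f x = Some y -> forall V, mopen V -> V y ->
    nbhs x [set x' | exists2 y', f x' = Some y' & V y'].

(* the set C_od(X,Y) (including the empty function) *)
Definition Cod : set pfun := [set f | open (dom f) /\ pcontinuous f].

Definition coSub (K : set X) (V : set Y) : set pfun :=
  [set f | Cod f /\ K `<=` dom f /\ forall x y, K x -> f x = Some y -> V y].

Definition tau_co (U : set pfun) : Prop :=
  U `<=` Cod /\
  forall f, U f -> exists n (K : 'I_n -> set X) (V : 'I_n -> set Y),
    [/\ forall i, compact (K i) /\ mopen (V i),
        forall i, coSub (K i) (V i) f &
        forall g, Cod g -> (forall i, coSub (K i) (V i) g) -> U g].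

Definition dK (K : set X) (f g : pfun) : R :=
  sup [set r | exists x y1 y2,
         [/\ K x, f x = Some y1, g x = Some y2 & r = d y1 y2]].

Definition BK (f : pfun) (K : set X) (e : R) : set pfun :=
  [set g | Cod g /\ g <> (fun=> None) /\ K `<=` dom g /\ dK K f g < e].

Definition ccBasic (B : set pfun) : Prop :=
  B = Cod \/
  exists f K e, Cod f /\ f <> (fun=> None) /\ K !=set0 /\ compact K /\
                K `<=` dom f /\ 0 < e /\ B = BK f K e.

Definition tau_cc (U : set pfun) : Prop :=
  U `<=` Cod /\
  forall f, U f -> exists B, [/\ ccBasic B, B f & B `<=` U].

End Cod.

From mathcomp Require Import all_boot all_order all_algebra.
From mathcomp Require Import all_classical all_reals all_analysis.
From mathcomp Require Import lra.
Import Order.TTheory GRing.Theory Num.Theory.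
Local Open Scope classical_set_scope.
Local Open Scope ring_scope.

(* A subbasic set <K,V> containing f contains a ball B_L(f,e): f(K) is a compact
   subset of the open set V, so a uniform e keeps the e-neighbourhood of f(K)
   inside V, and a finite intersection of such sets contains the ball around the
   union L of the K_i (enlarged by a point of dom f to make it nonempty).
   Conversely, if f lies in B_K(f0,e), let r = (e - d_K(f0,f))/4 and cover K by
   finitely many sets K_k = K ∩ f^-1(closed ball(c_k, r)); every g in all the
   <K_k, ball(c_k, 2r)> satisfies d_K(f0,g) <= d_K(f0,f) + 3r < e.
   The sets K_k are compact because {x | x ∉ dom f or d(c, f x) <= r} is closed. *)

Section compact_uniform.
Context {X : topologicalType} {K : set X}.
Hypothesis cK : compact K.

Lemma compact_finite_subcover (N : X -> set X) :
  (forall z, K z -> nbhs z (N z)) ->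
  exists n (z : 'I_n -> X), (forall k, K (z k)) /\
    forall x, K x -> exists k, N (z k) x.
Proof.
move=> Nz.
(* near coverings along the filter of sequences containing a given finite set
   of points are finite subcovers *)
pose F := filter_from [set: seq X]
  (fun t : seq X => [set s : seq X | {subset t <= s}]).
have FF : Filter F.
  apply: filter_from_filter; first by exists [::].
  move=> t1 t2 _ _; exists (t1 ++ t2) => // s ts.
  by split=> z zt; apply: ts; rewrite mem_cat zt ?orbT.
have /compact_near_coveringP/(_ _ F _ FF) := cK.
case/(_ (fun s x => exists z, [/\ z \in s, K z & N z x])).
  move=> x Kx; exists (N x, [set s | {subset [:: x] <= s}]).
    by split; [exact: Nz | exists [:: x]].
  by case=> x' s [/= Nx' xs]; exists x; split; rewrite ?xs ?mem_head.
move=> t _ /(_ t (fun z zt => zt)) tcov.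
pose s := in_tuple [seq z <- t | `[< K z >]].
exists (size s), (tnth s); split.
  by move=> k; have := mem_tnth k s; rewrite mem_filter => /andP[/asboolP].
move=> x /tcov[z [zt Kz Nzx]].
have /tnthP[k zk] : z \in s by rewrite mem_filter zt andbT; apply/asboolP.
by exists k; rewrite -zk.
Qed.

Context {R : realType}.

Lemma compact_near0_uniform (Q : R -> X -> Prop) :
  (forall e e' x, 0 < e' <= e -> Q e x -> Q e' x) ->
  (forall z, K z -> exists2 e, 0 < e & nbhs z (Q e)) ->
  \forall e \near (0 : R)^'+, forall x, K x -> Q e x.
Proof.
move=> Qanti Qloc; have /compact_near_coveringP/(_ R _ Q _) := cK; apply.
move=> z /Qloc[e0 e0p Qe0]; exists (Q e0, [set e | 0 < e <= e0]).
  split=> //=; near=> e; apply/andP; split; near: e; first exact: nbhs_right_gt.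
  exact: nbhs_right_le.
by case=> x e /= [Qx e0e]; exact: Qanti Qx.
Unshelve. all: by end_near. Qed.

Lemma compact_nearoo_uniform (Q : R -> X -> Prop) :
  (forall e e' x, e <= e' -> Q e x -> Q e' x) ->
  (forall z, K z -> exists e, nbhs z (Q e)) ->
  \forall e \near +oo, forall x, K x -> Q e x.
Proof.
move=> Qmono Qloc; have /compact_near_coveringP/(_ R _ Q _) := cK; apply.
move=> z /Qloc[e0 Qe0]; exists (Q e0, [set e | e0 <= e]).
  by split=> //=; exact: nbhs_pinfty_ge (num_real e0).
by case=> x e /= [Qx e0e]; exact: Qmono Qx.
Qed.

End compact_uniform.

Section partial_maps_into_metric_space.
Context {R : realType} {X : topologicalType} {Y : Type} (d : Y -> Y -> R).
Hypothesis dm : is_metric d.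

Lemma d_refl y : d y y = 0.
Proof. by case: dm => dP _ _; apply/dP. Qed.

Lemma d_sym y z : d y z = d z y.
Proof. by case: dm. Qed.

Lemma d_triangle y z w : d y w <= d y z + d z w.
Proof. by case: dm. Qed.

Lemma mopen_ball c r : mopen d [set y | d c y < r].
Proof.
move=> y cy; exists (r - d c y); first by rewrite subr_gt0.
by move=> y' yy' /=; have := d_triangle c y y'; lra.
Qed.

Lemma pcontinuous_ball {f : @pfun X Y} {x c r} :
  pcontinuous d f -> f x = Some c -> 0 < r ->
  nbhs x [set x' | exists2 y, f x' = Some y & d c y < r].
Proof.
by move=> fC fx r0; apply: (fC x c fx _ (mopen_ball c r)); rewrite /= d_refl.
Qed.

Definition pcball (f : @pfun X Y) (c : Y) (r : R) : set X :=
  [set x | forall y, f x = Some y -> d c y <= r].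

Lemma closed_pcball {f} c r : pcontinuous d f -> closed (pcball f c r).
Proof.
move=> fC x clx y fx; rewrite leNgt; apply/negP => rcy.
have /(pcontinuous_ball fC fx)/clx[x' [x'r [y' fx' yy']]] : 0 < d c y - r.
  by rewrite subr_gt0.
have := x'r y' fx'; have := d_triangle c y' y; rewrite (d_sym y' y); lra.
Qed.

Lemma compact_pcball_cover {K f r} : compact K -> pcontinuous d f ->
  K `<=` dom f -> 0 < r ->
  exists n (c : 'I_n -> Y), forall x, K x -> exists k, pcball f (c k) r x.
Proof.
move=> cK fC Kf r0.
pose N z := [set x | forall c, f z = Some c -> pcball f c r x].
have [|n [z [Kz zcov]]] := compact_finite_subcover cK N.
  move=> z /Kf[c fz]; apply: filterS (pcontinuous_ball fC fz r0).
  move=> x [y fx cy] c'; rewrite fz => -[<-] y'; rewrite fx => -[<-].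
  exact: ltW.
have [c fzc] := choice (fun k => Kf _ (Kz k)).
by exists n, c => x /zcov[k Nx]; exists k; exact: Nx.
Qed.

Lemma dK_le (K : set X) (f g : @pfun X Y) r :
  K !=set0 -> K `<=` dom f -> K `<=` dom g ->
  (forall x y1 y2, K x -> f x = Some y1 -> g x = Some y2 -> d y1 y2 <= r) ->
  dK d K f g <= r.
Proof.
move=> [x Kx] Kf Kg dr; apply: ge_sup.
  have [y1 fx] := Kf x Kx; have [y2 gx] := Kg x Kx.
  by exists (d y1 y2), x, y1, y2.
move=> q [x' [y1 [y2 [Kx' fx' gx' ->]]]]; exact: (dr x' y1 y2 Kx' fx' gx').
Qed.

Lemma dK_has_ubound (K : set X) (f g : @pfun X Y) :
  compact K -> pcontinuous d f -> pcontinuous d g ->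
  K `<=` dom f -> K `<=` dom g ->
  has_ubound [set r | exists x y1 y2,
    [/\ K x, f x = Some y1, g x = Some y2 & r = d y1 y2]].
Proof.
move=> cK fC gC Kf Kg.
pose Q M x := forall y1 y2, f x = Some y1 -> g x = Some y2 -> d y1 y2 <= M.
have : \forall M \near +oo, forall x, K x -> Q M x.
  apply: compact_nearoo_uniform => //.
    by move=> M M' x MM' QM y1 y2 fx gx; apply: le_trans MM'; exact: QM.
  move=> z Kz; have [a fz] := Kf z Kz; have [b gz] := Kg z Kz.
  exists (d a b + 2).
  apply: filterS (filterI (pcontinuous_ball fC fz ltr01)
                          (pcontinuous_ball gC gz ltr01)).
  move=> x [[a' fx aa'] [b' gx bb']] y1 y2; rewrite fx gx => -[<-] [<-].
  have := d_triangle a' a b'; have := d_triangle a b b'.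
  by rewrite (d_sym a' a); lra.
move=> /filter_ex[M KQ].
by exists M => q [x [y1 [y2 [Kx fx gx ->]]]]; exact: (KQ x Kx y1 y2 fx gx).
Qed.

Lemma le_dK {K : set X} {f g : @pfun X Y} {x y1 y2} :
  compact K -> pcontinuous d f -> pcontinuous d g ->
  K `<=` dom f -> K `<=` dom g -> K x -> f x = Some y1 -> g x = Some y2 ->
  d y1 y2 <= dK d K f g.
Proof.
move=> cK fC gC Kf Kg Kx fx gx; apply: ub_le_sup; first exact: dK_has_ubound.
by exists x, y1, y2.
Qed.

Lemma BK_center (f : @pfun X Y) K e : Cod d f -> f <> (fun=> None) ->
  K !=set0 -> K `<=` dom f -> 0 < e -> BK d f K e f.
Proof.
move=> fC fn K0 Kf e0; do !split => //; apply: le_lt_trans e0.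
by apply: dK_le => // x y1 y2 _ ->[->]; rewrite d_refl.
Qed.

Lemma coSub_near0_margin (K : set X) V f :
  compact K -> mopen d V -> coSub d K V f ->
  \forall e \near (0 : R)^'+, forall x, K x ->
    forall y y', f x = Some y -> d y y' < e -> V y'.
Proof.
move=> cK oV [fC [Kf KV]]; apply: compact_near0_uniform => //.
  move=> e e' x /andP[_ e'e] Qx y y' fx yy'; apply: Qx fx _.
  exact: lt_le_trans e'e.
move=> z Kz; have [a fz] := Kf z Kz.
have [e e0 aV] := oV a (KV z a Kz fz).
have e2 : 0 < e / 2 by lra.
exists (e / 2) => //; apply: filterS (pcontinuous_ball fC.2 fz e2).
move=> x [a' fx aa'] y y'; rewrite fx => -[<-] ay'; apply: aV.
by have := d_triangle a a' y'; lra.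
Qed.

Lemma BK_in_coSubs {n} {K : 'I_n -> set X} {V : 'I_n -> set Y} {f x0} :
  (forall i, compact (K i) /\ mopen d (V i)) ->
  (forall i, coSub d (K i) (V i) f) -> dom f x0 ->
  exists L e, [/\ compact L, L x0, L `<=` dom f, 0 < e &
    forall g, BK d f L e g -> forall i, coSub d (K i) (V i) g].
Proof.
move=> KV fKV fx0.
pose L := \big[setU/set0]_(i < n) K i `|` [set x0].
have KL i : K i `<=` L by move=> x Kx; left; rewrite (bigD1 i) //=; left.
have cL : compact L.
  apply: compactU; last exact: compact_set1.
  by apply: bigsetU_compact => i _; exact: (KV i).1.
have Lf : L `<=` dom f.
  move=> x [|->//]; move: x; elim/big_ind: _ => //.
    by move=> A B Af Bf x [/Af|/Bf].
  by move=> i _; exact: (fKV i).2.1.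
have /filter_ex[e [e0 margin]] : \forall e \near (0 : R)^'+, 0 < e /\
    forall i x, K i x -> forall y y', f x = Some y -> d y y' < e -> V i y'.
  near=> e; split; first by near: e; exact: nbhs_right_gt.
  near: e; apply: filter_forall => i.
  exact: coSub_near0_margin (KV i).1 (KV i).2 (fKV i).
exists L, e; split => //; first by right.
move=> g [gC [_ [Lg dlt]]] i; split => //; split; first by move=> x /KL/Lg.
move=> x y Kx gx; have [y1 fx] := Lf x (KL i x Kx).
apply: (margin i x Kx y1 y fx); apply: le_lt_trans dlt.
exact: le_dK cL (fKV i).1.2 gC.2 Lf Lg (KL i x Kx) fx gx.
Unshelve. all: by end_near. Qed.

Lemma tau_co_cc (U : set (@pfun X Y)) : tau_co d U -> tau_cc d U.
Proof.
move=> [UC Uco]; split => // f Uf.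
have [n [K [V [KV fKV KVU]]]] := Uco f Uf.
have fC := UC f Uf.
have [[x0 fx0]|dom0] := pselect (dom f !=set0).
- have [L [e [cL Lx0 Lf e0 BKV]]] := BK_in_coSubs KV fKV fx0.
  have fn : f <> (fun=> None) by move=> fE; case: fx0 => y; rewrite fE.
  exists (BK d f L e); split.
  + by right; exists f, L, e; do !split => //; exists x0.
  + by apply: BK_center => //; exists x0.
  + by move=> g Bg; apply: KVU (BKV g Bg); case: Bg.
- exists (Cod d); split=> //; first by left.
  move=> g gC; apply: KVU => // i; split => //.
  by split=> [x Kx|x y Kx]; exfalso; apply: dom0; exists x; exact: (fKV i).2.1.
Qed.

Lemma coSubs_in_BK {f0 : @pfun X Y} {K e f} : compact K -> K !=set0 ->
  Cod d f0 -> K `<=` dom f0 -> BK d f0 K e f ->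
  exists n (K' : 'I_n -> set X) (V : 'I_n -> set Y),
    [/\ forall i, compact (K' i) /\ mopen d (V i),
         forall i, coSub d (K' i) (V i) f &
         forall g, Cod d g -> (forall i, coSub d (K' i) (V i) g) ->
           BK d f0 K e g].
Proof.
move=> cK [x0 Kx0] f0C Kf0 [fC [fn [Kf dlt]]].
set D := dK d K f0 f; have De : D < e by [].
pose r := (e - D) / 4; have r0 : 0 < r by rewrite /r; lra.
have [n [c Kc]] := compact_pcball_cover cK fC.2 Kf r0.
exists n, (fun k => K `&` pcball f (c k) r).
exists (fun k => [set y | d (c k) y < 2 * r]); split.
- move=> k; split; last exact: mopen_ball.
  exact: compact_closedI cK (closed_pcball _ _ fC.2).
- move=> k; split=> //; split=> [x [/Kf]//|x y [_ cxr] fx /=].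
  by have := cxr y fx; lra.
move=> g gC gKV.
have Kg : K `<=` dom g.
  by move=> x Kx; have [k cx] := Kc x Kx; exact: (gKV k).2.1 x (conj Kx cx).
split=> //; split; first by move=> gE; have [y] := Kg x0 Kx0; rewrite gE.
split=> //; apply: (@le_lt_trans _ _ (D + 3 * r)); last by rewrite /r; lra.
apply: dK_le => //; first by exists x0.
move=> x y0 y2 Kx f0x gx; have [k cx] := Kc x Kx; have [y1 fx] := Kf x Kx.
have f0f : d y0 y1 <= D by exact: le_dK cK f0C.2 fC.2 Kf0 Kf Kx f0x fx.
have := cx y1 fx; have := (gKV k).2.2 x y2 (conj Kx cx) gx.
have := d_triangle y0 y1 y2; have := d_triangle y1 (c k) y2.
rewrite (d_sym y1 (c k)) /=; lra.
Qed.

Lemma tau_cc_co (U : set (@pfun X Y)) : tau_cc d U -> tau_co d U.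
Proof.
move=> [UC Ucc]; split => // f Uf.
have [B [[->|[f0 [K [e [f0C [_ [K0 [cK [Kf0 [_ ->]]]]]]]]]] Bf BU]] := Ucc f Uf.
- exists 0%N, (fun=> set0), (fun=> setT).
  by split=> [[]|[]|g gC _]; last exact: BU.
- have [n [K' [V [KV fKV BKV]]]] := coSubs_in_BK cK K0 f0C Kf0 Bf.
  by exists n, K', V; split=> // g gC /(BKV g gC)/BU.
Qed.

End partial_maps_into_metric_space.

Theorem mainTheorem5 (R : realType) (X : topologicalType) (Y : Type)
  (d : Y -> Y -> R) :
  @hausdorff_space X -> locally_compact [set: X] -> @second_countable X ->
  is_metric d ->
  forall U : set (@pfun X Y), tau_co d U <-> tau_cc d U.
Proof.
by move=> _ _ _ dm U; split; [exact: tau_co_cc | exact: tau_cc_co].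
Qed.
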